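(* Let $\vec\sigma$ be any preference profile over $m$ alternatives with $n$ agents, and $d$ any pseudometric consistent with $\vec\sigma$. Let $\tau<1/m$ and let $\mathcal A'\subseteq\mathcal A$ be the set of alternatives with plurality score at least $\tau n$. Then $$\frac{\min_{X\in\mathcal A'}\mathrm{SC}(X,d)}{\min_{X\in\mathcal A}\mathrm{SC}(X,d)}\le 1+\frac{2}{1-\tau m}.$$ Consequently, if $f$ is a deterministic voting rule with metric distortion at most $D$, then the alternative $f(\vec\sigma')$, where $\vec\sigma'$ is $\vec\sigma$ restricted to $\mathcal A'$, satisfies $\mathrm{SC}(f(\vec\sigma'),d)\le D\left(1+\frac{2}{1-\tau m}\right)\min_{X\in\mathcal A}\mathrm{SC}(X,d)$.
   Context: Setting: $\mathcal N$ is a set of $n$ agents and $\mathcal A$ a set of $m$ alternatives. Each agent $i$ has a strict ranking $\sigma_i$ of $\mathcal A$; $X\succ_i Y$ means $i$ ranks $X$ above $Y$. The plurality score of $X$ is the number of agents ranking $X$ first. Restricting $\vec\sigma$ to $\mathcal A'$ means each agent's ranking is restricted to $\mathcal A'$ (relative order preserved). Metric framework: $d:(\mathcal N\cup\mathcal A)^2\to\mathbb R_{\ge0}$ is a pseudometric ($d(a,a)=0$, symmetric, triangle inequality). $d$ is consistent with $\vec\sigma$ if $X\succ_i Y\Rightarrow d(i,X)\le d(i,Y)$ for all $i,X,Y$. $\mathrm{SC}(X,d)=\sum_{i\in\mathcal N}d(i,X)$. The metric distortion of a distribution $p$ on $d$ is $\mathbb E_{X\sim p}[\mathrm{SC}(X,d)]/\min_X\mathrm{SC}(X,d)$;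 the metric distortion of a rule $f$ is the supremum of this quantity for $p=f(\vec\sigma)$ over all profiles $\vec\sigma$ (any $n$, any alternative set) and all pseudometrics $d$ consistent with $\vec\sigma$. *)

From HB Require Import structures.
From mathcomp Require Import all_boot all_order all_algebra.
From mathcomp Require Import reals.
Set Implicit Arguments. Unset Strict Implicit. Unset Printing Implicit Defensive.
Import Order.TTheory GRing.Theory Num.Theory.
Local Open Scope ring_scope.

(* A profile of n agents over the finite set of alternatives A: agent i's
   ranking is the sequence σ i, best alternative first. *)
Definition profile (A : finType) (n : nat) := 'I_n -> seq A.

Definition is_profile (A : finType) (n : nat) (σ : profile A n) : Prop :=
  forall i : 'I_n, perm_eq (σ i) (enum A).

Definition prefers (A : finType) (n : nat) (σ : profile A n) (i : 'I_n) (X Y : A) : bool :=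
  (index X (σ i) < index Y (σ i))%N.

Definition plurality (A : finType) (n : nat) (σ : profile A n) (X : A) : nat :=
  #|[set i : 'I_n | ohead (σ i) == Some X]|.

(* pseudometric on a type (here N ∪ A = 'I_n + A), values in R_{>=0} *)
Definition pseudometric (R : realType) (T : Type) (d : T -> T -> R) : Prop :=
  [/\ forall x y, 0 <= d x y,
      forall x, d x x = 0,
      forall x y, d x y = d y x
    & forall x y z, d x z <= d x y + d y z].

Definition consistent (R : realType) (A : finType) (n : nat) (σ : profile A n)
  (d : 'I_n + A -> 'I_n + A -> R) : Prop :=
  forall (i : 'I_n) (X Y : A), prefers σ i X Y -> d (inl i) (inr X) <= d (inl i) (inr Y).

Definition SC (R : realType) (A : finType) (n : nat) (d : 'I_n + A -> 'I_n + A -> R)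
  (X : A) : R := \sum_(i < n) d (inl i) (inr X).

Definition alts_in (A : finType) (S : {set A}) : finType := {x : A | x \in S}.

Definition restrict (A : finType) (n : nat) (σ : profile A n) (S : {set A}) :
  profile (alts_in S) n := fun i => pmap (insub : A -> option (alts_in S)) (σ i).

Definition voting_rule :=
  forall (A : finType) (n : nat), (0 < #|A|)%N -> profile A n -> A.

Definition distortion_at_most (R : realType) (f : voting_rule) (D : R) : Prop :=
  forall (A : finType) (n : nat) (HA : (0 < #|A|)%N) (σ : profile A n),
    is_profile σ ->
    forall d : 'I_n + A -> 'I_n + A -> R, pseudometric d -> consistent σ d ->
    forall Y : A, SC d (f A n HA σ) <= D * SC d Y.

(* Let O be an optimal alternative and c := 1 - τ m.  If O already has
   plurality score at least τ n we are done.  Otherwise τ n > 0, and at most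
   m τ n agents rank first an alternative of score below τ n, so the set S of
   agents whose top choice lies in A' has at least c n members.  Pick the
   agent i of S closest to O; then |S| d(i,O) <= SC(O), hence
   n d(i,O) <= SC(O)/c.  Its top choice X lies in A' and, by consistency and
   the triangle inequality, d(O,X) <= 2 d(i,O); summing the triangle
   inequality over all agents gives SC(X) <= SC(O) + n d(O,X)
   <= (1 + 2/c) SC(O).

   For the second part, the restricted profile is again a profile and the
   pseudometric pulled back to A' is consistent with it, so a rule of
   distortion D picks an alternative within D of every alternative of A'.
   Since every such D is at least 1 (discrete metric on one alternative),
   multiplying the first part by D concludes. *)
From HB Require Import structures.
From mathcomp Require Import all_boot all_order all_algebra.
From mathcomp Require Import reals.
From mathcomp Require Import lra.
Set Implicit Arguments. Unset Strict Implicit. Unset Printing Implicit Defensive.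
Import Order.TTheory GRing.Theory Num.Theory.
Local Open Scope ring_scope.

Section Rankings.
Variables (A : finType) (n : nat) (σ : profile A n).
Hypothesis σ_profile : is_profile σ.

Lemma ranking_cons (x0 : A) (i : 'I_n) : σ i = head x0 (σ i) :: behead (σ i).
Proof.
have sz : size (σ i) = #|A| by rewrite (perm_size (σ_profile i)) -cardE.
have A_gt0 : (0 < #|A|)%N by apply/card_gt0P; exists x0.
by case: (σ i) sz => [|x s] //= sz; move: A_gt0; rewrite -sz.
Qed.

Lemma plurality_head (x0 X : A) :
  plurality σ X = #|[set i | head x0 (σ i) == X]|.
Proof.
apply: eq_card => i; rewrite !inE (ranking_cons x0 i) /=.
by apply/eqP/eqP => [[]|->].
Qed.

Lemma head_closest (R : realType) (d : 'I_n + A -> 'I_n + A -> R) (x0 : A) :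
  consistent σ d ->
  forall i Y, d (inl i) (inr (head x0 (σ i))) <= d (inl i) (inr Y).
Proof.
move=> d_cons i Y; set x := head x0 (σ i).
case: (eqVneq x Y) => [<- //|xY].
by apply: d_cons; rewrite /prefers (ranking_cons x0 i) /= -/x eqxx (negbTE xY).
Qed.

End Rankings.

Lemma card_preim_fibres (I A : finType) (top : I -> A) (P : pred A) :
  #|[set i | P (top i)]| = (\sum_(X | P X) #|[set i | top i == X]|)%N.
Proof.
rewrite -sum1_card (eq_bigl (fun i => P (top i))) => [|i]; last by rewrite inE.
rewrite (partition_big top P) //=; apply: eq_bigr => X PX.
rewrite -sum1_card; apply: eq_bigl => i; rewrite !inE.
by case: (eqVneq (top i) X) => [->|]; rewrite ?PX ?andbF ?andbT.
Qed.

(* If τ n >= 0, at least (1 - τ m) n agents rank first an alternative whose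
   plurality score is at least τ n: the others are spread over at most m
   alternatives, each ranked first by fewer than τ n agents. *)
Lemma many_agents_top_in_A' (R : realType) (A : finType) (n : nat)
    (σ : profile A n) (τ : R) (x0 : A) :
  is_profile σ -> 0 <= τ * n%:R ->
  n%:R * (1 - τ * #|A|%:R) <=
  #|[set i | head x0 (σ i) \in [set X | τ * n%:R <= (plurality σ X)%:R]]|%:R.
Proof.
move=> σ_profile τn_ge0; set A' := [set X | _ <= _]; set S := [set i | _ \in A'].
have split_agents : n = (#|S| + #|[set i | head x0 (σ i) \in ~: A']|)%N.
  rewrite -{1}(card_ord n) -(cardsC S); congr (_ + _)%N.
  by apply: eq_card => i; rewrite !inE.
have outside_A' : #|[set i | head x0 (σ i) \in ~: A']| =
                  (\sum_(X in ~: A') plurality σ X)%N.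
  rewrite card_preim_fibres; apply: eq_bigr => X _.
  by rewrite (plurality_head σ_profile x0).
have few_outside :
    #|[set i | head x0 (σ i) \in ~: A']|%:R <= #|A|%:R * (τ * n%:R) :> R.
  rewrite outside_A' natr_sum; apply: le_trans (_ : \sum_(X in ~: A') τ * n%:R <= _).
    by apply: ler_sum => X; rewrite !inE -ltNge => /ltW.
  rewrite sumr_const -[_ *+ #|_|]mulr_natl; apply: ler_wpM2r => //.
  by rewrite ler_nat; exact: max_card.
have : n%:R <= #|S|%:R + #|A|%:R * (τ * n%:R) :> R.
  by rewrite {1}split_agents natrD lerD2l.
lra.
Qed.

Lemma exists_le_mean (R : realType) (I : finType) (S : {set I}) (f : I -> R) :
  S != set0 -> exists2 i, i \in S & #|S|%:R * f i <= \sum_(j in S) f j.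
Proof.
case/set0Pn => j1 j1S; case: (arg_minP f j1S) => i iS imin.
exists i => //; rewrite mulr_natl -sumr_const; exact: ler_sum.
Qed.

Section MetricFacts.
Variables (R : realType) (A : finType) (n : nat) (d : 'I_n + A -> 'I_n + A -> R).
Hypothesis d_metric : pseudometric d.

Lemma SC_ge0 (X : A) : 0 <= SC d X.
Proof. by case: d_metric => d_ge0 _ _ _; apply: sumr_ge0 => i _. Qed.

Lemma SC_triangle (O X : A) : SC d X <= SC d O + n%:R * d (inr O) (inr X).
Proof.
case: d_metric => _ _ _ d_tri.
apply: le_trans (_ : \sum_(i < n) (d (inl i) (inr O) + d (inr O) (inr X)) <= _).
  by apply: ler_sum => i _; apply: d_tri.
by rewrite big_split /= sumr_const card_ord mulr_natl.
Qed.

Lemma closer_alt_near (i : 'I_n) (O X : A) :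
  d (inl i) (inr X) <= d (inl i) (inr O) ->
  d (inr O) (inr X) <= 2 * d (inl i) (inr O).
Proof.
case: d_metric => _ _ d_sym d_tri iX.
apply: le_trans (d_tri _ (inl i) _) _; rewrite d_sym; lra.
Qed.

Lemma exists_close_agent (S : {set 'I_n}) (O : A) :
  S != set0 -> exists2 i, i \in S & #|S|%:R * d (inl i) (inr O) <= SC d O.
Proof.
case: d_metric => d_ge0 _ _ _ S0.
have [i iS close] := exists_le_mean (fun i => d (inl i) (inr O)) S0.
exists i => //; apply: le_trans close _.
by rewrite /SC [leRHS](bigID (mem S)) /= lerDl sumr_ge0.
Qed.

End MetricFacts.

Lemma restricted_optimum_bound (R : realType) (A : finType) (n : nat)
    (σ : profile A n) (d : 'I_n + A -> 'I_n + A -> R) (τ : R) :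
  (0 < #|A|)%N -> is_profile σ -> pseudometric d -> consistent σ d ->
  τ < (#|A|%:R)^-1 ->
  exists2 X : A, X \in [set X : A | τ * n%:R <= (plurality σ X)%:R] &
    forall Y : A, SC d X <= (1 + 2 / (1 - τ * #|A|%:R)) * SC d Y.
Proof.
move=> A_gt0 σ_profile d_metric d_cons τ_small.
have /card_gt0P[x0 _] := A_gt0.
set A' := [set X : A | _]; set c := 1 - _.
have c_gt0 : 0 < c by rewrite subr_gt0 -ltr_pdivlMr ?ltr0n // div1r.
have bound_ge1 : 1 <= 1 + 2 / c by rewrite lerDl divr_ge0 // ltW.
have [O O_opt] : exists O, forall Y, SC d O <= SC d Y.
  by case: (arg_minP (SC d) (in_setT x0)) => O _ O_opt; exists O => Y; exact: O_opt (in_setT Y).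
have [OA'|OnA'] := boolP (O \in A').
  by exists O => // Y; apply: le_trans (O_opt Y) _; rewrite ler_peMl ?SC_ge0.
have τn_gt0 : 0 < τ * n%:R.
  by move: OnA'; rewrite inE -ltNge; apply: le_lt_trans.
have n_gt0 : 0 < n%:R :> R.
  by rewrite ltr0n lt0n; apply: contraTneq τn_gt0 => ->; rewrite mulr0 ltxx.
set S := [set i | head x0 (σ i) \in A'].
have S_large := many_agents_top_in_A' x0 σ_profile (ltW τn_gt0).
have S0 : S != set0.
  by rewrite -card_gt0 -(ltr0n R); apply: lt_le_trans S_large; rewrite mulr_gt0.
have [i iS i_close] := exists_close_agent d_metric O S0.
exists (head x0 (σ i)); first by move: iS; rewrite inE.
move=> Y; apply: le_trans (SC_triangle d_metric O _) _.
have dOX := closer_alt_near d_metric (head_closest σ_profile x0 d_cons i O).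
have n_dist : n%:R * d (inl i) (inr O) <= SC d O / c.
  rewrite ler_pdivlMr //; apply: le_trans i_close.
  rewrite mulrAC; apply: ler_wpM2r; [by case: d_metric | exact: S_large].
apply: le_trans (_ : (1 + 2 / c) * SC d O <= _); last first.
  by rewrite ler_wpM2l // (le_trans ler01 bound_ge1).
rewrite mulrDl mul1r lerD2l.
apply: le_trans (_ : 2 * (n%:R * d (inl i) (inr O)) <= _).
  by rewrite mulrCA ler_wpM2l.
by rewrite -mulrA ler_wpM2l // [_^-1 * _]mulrC.
Qed.

Section Restriction.
Variables (A : finType) (n : nat) (σ : profile A n) (S : {set A}).

Lemma index_restrict (s : seq A) (X Y : alts_in S) :
  (index X (pmap insub s) < index Y (pmap insub s))%N ->
  (index (val X) s < index (val Y) s)%N.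
Proof.
elim: s => [//|x s IH] /=.
case: insubP => [z _ <-|xnS] /=.
  by rewrite !(inj_eq val_inj); case: eqP; case: eqP => //= _ _; exact: IH.
have notS (Z : alts_in S) : (x == val Z) = false.
  by apply/negbTE; apply: contraNneq xnS => ->; exact: valP.
by rewrite !notS ltnS; exact: IH.
Qed.

Lemma restrict_is_profile : is_profile σ -> is_profile (restrict σ S).
Proof.
move=> σ_profile i; apply: uniq_perm; last 1 first.
- by move=> z; rewrite mem_enum mem_pmap_sub (perm_mem (σ_profile i)) mem_enum.
- apply: (pmap_uniq (g := val)); first exact: insubK.
  by rewrite (perm_uniq (σ_profile i)) enum_uniq.
- exact: enum_uniq.
Qed.

Definition restrict_metric (R : realType) (d : 'I_n + A -> 'I_n + A -> R) :
    'I_n + alts_in S -> 'I_n + alts_in S -> R :=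
  let emb z := match z with inl i => inl i | inr x => inr (val x) end in
  fun x y => d (emb x) (emb y).

Lemma restrict_metric_pseudometric (R : realType) (d : 'I_n + A -> 'I_n + A -> R) :
  pseudometric d -> pseudometric (restrict_metric d).
Proof. by case=> d_ge0 d_refl d_sym d_tri; split=> *; rewrite /restrict_metric. Qed.

Lemma restrict_metric_consistent (R : realType) (d : 'I_n + A -> 'I_n + A -> R) :
  consistent σ d -> consistent (restrict σ S) (restrict_metric d).
Proof. by move=> d_cons i X Y /index_restrict; apply: d_cons. Qed.

Lemma restricted_rule_bound (R : realType) (d : 'I_n + A -> 'I_n + A -> R)
    (f : voting_rule) (D : R) (HS : (0 < #|alts_in S|)%N) (X : alts_in S) :
  distortion_at_most f D -> is_profile σ -> pseudometric d -> consistent σ d ->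
  SC d (val (f (alts_in S) n HS (restrict σ S))) <= D * SC d (val X).
Proof.
move=> f_dist σ_profile d_metric d_cons.
exact: f_dist (restrict_is_profile σ_profile) _
  (restrict_metric_pseudometric d_metric) (restrict_metric_consistent d_cons) X.
Qed.

End Restriction.

Definition discrete_metric (R : realType) (T : eqType) (x y : T) : R := (x != y)%:R.

Lemma discrete_pseudometric (R : realType) (T : eqType) :
  pseudometric (@discrete_metric R T).
Proof.
rewrite /discrete_metric; split=> [x y|x|x y|x y z]; rewrite ?eqxx ?ler0n // 1?eq_sym //.
case: (eqVneq x z) => [_|xz]; first by rewrite addr_ge0.
by case: (eqVneq x y) => [<-|_]; rewrite ?xz ?add0r ?lerDl.
Qed.

(* Every distortion bound is at least 1: with one alternative and the
   discrete metric, the rule's choice and the optimum both cost 1. *)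
Lemma distortion_ge1 (R : realType) (f : voting_rule) (D : R) :
  distortion_at_most f D -> 1 <= D.
Proof.
move=> f_dist; have unit_gt0 : (0 < #|{: unit}|)%N by rewrite card_unit.
have := f_dist unit 1%N unit_gt0 (fun _ => enum {: unit}) (fun _ => perm_refl _)
  _ (@discrete_pseudometric R _) (fun _ _ _ _ => lexx _) tt.
by rewrite /SC !big_ord1 /discrete_metric /= mulr1.
Qed.

Theorem mainTheorem2 (R : realType) (A : finType) (n : nat) (σ : profile A n)
  (d : 'I_n + A -> 'I_n + A -> R) (τ : R) :
  (0 < #|A|)%N -> is_profile σ -> pseudometric d -> consistent σ d ->
  τ < (#|A|%:R)^-1 ->
  let A' := [set X : A | τ * n%:R <= (plurality σ X)%:R] in
  let bound := 1 + 2 / (1 - τ * #|A|%:R) in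
  (* min_{X in A'} SC(X,d) <= bound * min_{X in A} SC(X,d) *)
  (exists2 X : A, X \in A' & forall Y : A, SC d X <= bound * SC d Y) /\
  (forall (f : voting_rule) (D : R), distortion_at_most f D ->
     (0 < #|alts_in A'|)%N /\
     forall (HA' : (0 < #|alts_in A'|)%N) (Y : A),
       SC d (val (f (alts_in A') n HA' (restrict σ A'))) <= D * bound * SC d Y).
Proof.
move=> A_gt0 σ_profile d_metric d_cons τ_small A' bound.
have [X XA' X_good] := restricted_optimum_bound A_gt0 σ_profile d_metric d_cons τ_small.
split; first by exists X.
move=> f D f_dist; pose XS : alts_in A' := exist _ X XA'.
split=> [|HA' Y]; first by apply/card_gt0P; exists XS.
apply: le_trans (restricted_rule_bound HA' XS f_dist σ_profile d_metric d_cons) _.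
have D_ge1 := distortion_ge1 f_dist.
rewrite -mulrA; apply: ler_wpM2l; last exact: X_good.
exact: le_trans ler01 D_ge1.
Qed.
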